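(* Let $v(0)\in\mathcal N^*$, $v(0)\neq0$, and $T>0$. For $0<\lambda\le1$ let $w^*$ be the solution on $[0,T]$ of $$\dot w^*(t)=\frac{\lambda}{w^*(t)E_0(t+w^*(t))}-1,\qquad w^*(0)=\frac1{m_1(0)}.$$ Then there exist constants $d_1,d_2$ depending only on $v(0)$ and $T$ such that for all $0<\lambda\le1$ and all $t$ with $\frac1{m_1(0)}+d_1\lambda\log(1/\lambda)\le t\le T$, $$\Big|w^*(t)-\frac{\lambda}{E_0(t)}\Big|\le d_2\lambda^2.$$
   Context: $\mathcal N^*$: finitely supported sequences $v=(v_k)_{k\ge1}$ of nonnegative reals; $m_1(0)=\sum_kkv_k(0)$. Critical core: with $U_0(x)=\sum_kv_k(0)(e^{-kx}-1)$, $E_0:(0,\infty)\to(0,\infty)$ is defined by $E_0(-1/U_0'(x))=\frac{(-U_0'(x))^3}{U_0''(x)}$ for $x\in\mathbb R$ ($x\mapsto-1/U_0'(x)$ is a bijection $\mathbb R\to(0,\infty)$). *)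

From Stdlib Require Import Reals Lra.
From Stdlib Require List.
From Coquelicot Require Import Coquelicot.
Open Scope R_scope.

(* An element v of N^* (finitely supported sequence (v_k)_{k>=1} of nonnegative
   reals) is represented by the list [v_1; v_2; ...; v_n] of its first n terms
   (all later terms are 0). *)
Definition in_Nstar (v : List.list R) : Prop := List.Forall (fun a => 0 <= a) v.

Definition Nstar_nonzero (v : List.list R) : Prop := exists a, List.In a v /\ a <> 0.

(* sum_{k >= k0} v_{k} f(k), where the list starts at index k0 *)
Fixpoint wsum (f : nat -> R) (v : List.list R) (k : nat) : R :=
  match v with
  | List.nil => 0
  | List.cons a v' => a * f k + wsum f v' (S k)
  end.

Definition m1 (v : List.list R) : R := wsum (fun k => INR k) v 1.

Definition U0 (v : List.list R) (x : R) : R :=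
  wsum (fun k => exp (- INR k * x) - 1) v 1.

(* E is the critical core E_0 of v: E(-1/U_0'(x)) = (-U_0'(x))^3 / U_0''(x)
   for every real x (this determines E on (0,oo)). *)
Definition is_critical_core (v : List.list R) (E : R -> R) : Prop :=
  forall x : R,
    E (- / Derive (U0 v) x) = (- Derive (U0 v) x) ^ 3 / Derive_n (U0 v) 2 x.

Definition continuous_on_closed (w : R -> R) (a b : R) : Prop :=
  forall t, a <= t <= b ->
    forall eps, 0 < eps -> exists delta, 0 < delta /\
      forall s, a <= s <= b -> Rabs (s - t) < delta -> Rabs (w s - w t) < eps.

Definition is_wstar_solution (v : List.list R) (E : R -> R) (lam T : R)
  (w : R -> R) : Prop :=
  continuous_on_closed w 0 T /\
  w 0 = / m1 v /\
  (forall t, 0 <= t <= T -> w t <> 0 /\ 0 < t + w t) /\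
  (forall t, 0 < t < T -> is_derive w t (lam / (w t * E (t + w t)) - 1)).

(* Write s(t) = t + w(t) and q(t) = lam / E(s(t)), so that the equation reads w' = q / w - 1.
   With S_j(x) = sum_k k^j v_k e^{-kx}, the core is parametrised by y = 1 / S_1(x),
   1 / E(y) = S_2(x) / S_1(x)^3; hence y^2 <= 1 / E(y) <= N y^2 (N the length of the
   support of v) and 1 / E is Lipschitz on bounded sets.
   Everything else is a sequence of barrier (first touching point) arguments. A priori,
   lam b <= w <= W on [0, T]. During the transient w decreases at rate about 1, staying below
   the solution of u' = C lam / u - 1, so after time 1/m_1 + O(lam log(1/lam)) it is O(lam).
   From then on w relaxes towards the quasi-equilibrium q at rate 1 / (8 C lam):
   |w - q| <= C' lam^2 + 6 C lam exp(-(t - tau) / (8 C lam)), because q drifts slowly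
   (s' = q / w is bounded). Finally q(t) = lam / E(t) + O(lam^2), since s(t) - t = w(t) = O(lam).
   For lam > 1/3 the crude bounds suffice. *)

From Stdlib Require Import Reals Lra Lia List.
From Coquelicot Require Import Coquelicot.
Open Scope R_scope.

Lemma is_derive_value (f : R -> R) (x l l' : R) :
  l = l' -> is_derive f x l -> is_derive f x l'.
Proof. now intros <-. Qed.

Lemma is_derive_Rplus (f g : R -> R) x df dg :
  is_derive f x df -> is_derive g x dg -> is_derive (fun y => f y + g y) x (df + dg).
Proof. exact (is_derive_plus f g x df dg). Qed.

Lemma is_derive_Rminus (f g : R -> R) x df dg :
  is_derive f x df -> is_derive g x dg -> is_derive (fun y => f y - g y) x (df - dg).
Proof. exact (is_derive_minus f g x df dg). Qed.

Lemma is_derive_Rmult (f g : R -> R) x df dg :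
  is_derive f x df -> is_derive g x dg ->
  is_derive (fun y => f y * g y) x (df * g x + f x * dg).
Proof. intros Hf Hg. exact (is_derive_mult f g x df dg Hf Hg Rmult_comm). Qed.

Lemma continuity_pt_ex_derive (f : R -> R) x : ex_derive f x -> continuity_pt f x.
Proof.
  intros H. apply continuity_pt_filterlim.
  exact (ex_derive_continuous (K := R_AbsRing) (V := R_NormedModule) f x H).
Qed.

Lemma le_of_derive_nonneg (f df : R -> R) a b : a <= b ->
  (forall x, a <= x <= b -> is_derive f x (df x)) ->
  (forall x, a <= x <= b -> 0 <= df x) -> f a <= f b.
Proof.
  intros Hab Hd Hp.
  destruct (MVT_gen f a b df) as [c [Hc Heq]];
    rewrite ?Rmin_left, ?Rmax_right in * by lra.
  - intros x Hx; apply Hd; lra.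
  - intros x Hx. apply continuity_pt_ex_derive. eexists; apply Hd; lra.
  - assert (0 <= df c) by (apply Hp; lra). nra.
Qed.

Lemma one_le_ln_inv x : 0 < x <= / 3 -> 1 <= ln (/ x).
Proof.
  intros Hx. rewrite <- (ln_exp 1). apply ln_le; [apply exp_pos|].
  apply Rle_trans with 3; [apply exp_le_3|]. apply (Rmult_le_reg_l x); [lra|].
  rewrite Rinv_r by lra. lra.
Qed.

Lemma exp_le_compat x y : x <= y -> exp x <= exp y.
Proof.
  intros H. destruct (Rle_lt_or_eq_dec _ _ H) as [H1|<-]; [|lra].
  now apply Rlt_le, exp_increasing.
Qed.

Lemma Rabs_sub_le_of_derive_bound (f g df dg : R -> R) a b : a <= b ->
  (forall x, a <= x <= b -> is_derive f x (df x)) ->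
  (forall x, a <= x <= b -> is_derive g x (dg x)) ->
  (forall x, a <= x <= b -> Rabs (df x) <= dg x) ->
  Rabs (f b - f a) <= g b - g a.
Proof.
  intros Hab Hf Hg Hb.
  assert (Hminus : g a - f a <= g b - f b).
  { apply (le_of_derive_nonneg (fun y => g y - f y) (fun x => dg x - df x)); auto.
    - intros x Hx. apply is_derive_Rminus; auto.
    - intros x Hx. specialize (Hb x Hx). apply Rabs_le_between in Hb. lra. }
  assert (Hplus : g a + f a <= g b + f b).
  { apply (le_of_derive_nonneg (fun y => g y + f y) (fun x => dg x + df x)); auto.
    - intros x Hx. apply is_derive_Rplus; auto.
    - intros x Hx. specialize (Hb x Hx). apply Rabs_le_between in Hb. lra. }
  apply Rabs_le. lra.
Qed.

(** * Continuity on a closed interval *)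

Section ContinuousOnClosed.
Variables a b : R.

Lemma continuous_on_closed_ext (f g : R -> R) :
  (forall t, a <= t <= b -> f t = g t) ->
  continuous_on_closed f a b -> continuous_on_closed g a b.
Proof.
  intros E H t Ht eps He. destruct (H t Ht eps He) as [d [Hd Hd']].
  exists d; split; auto. intros s Hs Hst. rewrite <- !E by auto. auto.
Qed.

Lemma continuous_on_closed_lipschitz (f g : R -> R) K : 0 <= K ->
  (forall s t, a <= s <= b -> a <= t <= b -> Rabs (g s - g t) <= K * Rabs (f s - f t)) ->
  continuous_on_closed f a b -> continuous_on_closed g a b.
Proof.
  intros HK HL H t Ht eps He.
  destruct (H t Ht (eps / (K + 1))) as [d [Hd Hd']]; [apply Rdiv_lt_0_compat; lra|].
  exists d; split; auto. intros s Hs Hst.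
  specialize (Hd' s Hs Hst). specialize (HL s t Hs Ht).
  apply Rlt_le_trans with ((K + 1) * (eps / (K + 1))); [|right; field; lra].
  pose proof (Rabs_pos (f s - f t)). nra.
Qed.

Lemma continuous_on_closed_plus (f g : R -> R) :
  continuous_on_closed f a b -> continuous_on_closed g a b ->
  continuous_on_closed (fun t => f t + g t) a b.
Proof.
  intros Hf Hg t Ht eps He.
  destruct (Hf t Ht (eps / 2)) as [d1 [Hd1 H1]]; [lra|].
  destruct (Hg t Ht (eps / 2)) as [d2 [Hd2 H2]]; [lra|].
  exists (Rmin d1 d2). split; [now apply Rmin_glb_lt|]. intros s Hs Hst.
  pose proof (Rmin_l d1 d2). pose proof (Rmin_r d1 d2).
  specialize (H1 s Hs ltac:(lra)). specialize (H2 s Hs ltac:(lra)).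
  replace (f s + g s - (f t + g t)) with ((f s - f t) + (g s - g t)) by ring.
  eapply Rle_lt_trans; [apply Rabs_triang| lra].
Qed.

Lemma continuous_on_closed_scal (f : R -> R) c :
  continuous_on_closed f a b -> continuous_on_closed (fun t => c * f t) a b.
Proof.
  apply (continuous_on_closed_lipschitz f _ (Rabs c)); [apply Rabs_pos|].
  intros s t _ _. rewrite <- Rabs_mult. right; f_equal; ring.
Qed.

Lemma continuous_on_closed_minus (f g : R -> R) :
  continuous_on_closed f a b -> continuous_on_closed g a b ->
  continuous_on_closed (fun t => f t - g t) a b.
Proof.
  intros Hf Hg.
  apply (continuous_on_closed_ext (fun t => f t + -1 * g t)); [intros; ring|].
  now apply continuous_on_closed_plus, continuous_on_closed_scal.
Qed.

Lemma continuous_on_closed_derive (f : R -> R) :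
  (forall t, a <= t <= b -> ex_derive f t) -> continuous_on_closed f a b.
Proof.
  intros H t Ht eps He.
  assert (Hc : continuity_pt f t) by now apply continuity_pt_ex_derive, H.
  destruct (Hc eps He) as [d [Hd Hd']]. exists d; split; auto.
  intros s Hs Hst. destruct (Req_dec s t) as [->|Hne].
  - unfold Rminus; rewrite Rplus_opp_r, Rabs_R0; lra.
  - apply (Hd' s). repeat split; auto.
Qed.

Lemma continuous_on_closed_subinterval (f : R -> R) a' b' :
  a <= a' -> b' <= b -> continuous_on_closed f a b -> continuous_on_closed f a' b'.
Proof.
  intros H1 H2 H t Ht eps He. destruct (H t ltac:(lra) eps He) as [d [Hd Hd']].
  exists d; split; auto. intros s Hs Hst. apply Hd'; auto; lra.
Qed.

Lemma continuous_on_closed_neg_near (f : R -> R) t :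
  continuous_on_closed f a b -> a <= t <= b -> f t < 0 ->
  exists d, 0 < d /\ forall s, a <= s <= b -> Rabs (s - t) < d -> f s < 0.
Proof.
  intros Hc Ht Hf. destruct (Hc t Ht (- f t)) as [d [Hd Hd']]; [lra|].
  exists d; split; auto. intros s Hs Hst.
  specialize (Hd' s Hs Hst). apply Rabs_def2 in Hd'. lra.
Qed.

End ContinuousOnClosed.

(** * Barrier arguments *)

Lemma first_zero (f : R -> R) a b t0 :
  continuous_on_closed f a b -> f a < 0 -> a <= t0 <= b -> 0 < f t0 ->
  exists t1, a < t1 < t0 /\ f t1 = 0 /\ forall s, a <= s < t1 -> f s < 0.
Proof.
  intros Hc Ha Ht0 Hf0.
  set (P := fun t => a <= t <= t0 /\ forall s, a <= s <= t -> f s < 0).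
  assert (HPa : P a) by (split; [lra| intros s Hs; replace s with a by lra; auto]).
  destruct (completeness P) as [m [Hub Hlub]].
  { exists t0; intros t [Ht _]; lra. }
  { now exists a. }
  assert (Ham : a <= m) by now apply Hub.
  assert (Hmt0 : m <= t0) by (apply Hlub; intros t [Ht _]; lra).
  assert (Hleft : forall s, a <= s < m -> f s < 0).
  { intros s Hs. destruct (Rlt_dec (f s) 0) as [|Hfs]; auto.
    enough (m <= s) by lra. apply Hlub. intros t [_ Ht].
    destruct (Rle_dec t s) as [|Hts]; auto. contradict Hfs. apply Ht; lra. }
  destruct (Rtotal_order (f m) 0) as [Hneg|[Hzero|Hpos]].
  - exfalso.
    destruct (continuous_on_closed_neg_near a b f m Hc ltac:(lra) Hneg) as [d [Hd Hnear]].
    assert (Hm : m < t0) by (destruct (Req_dec m t0); [subst; lra| lra]).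
    set (t' := Rmin (m + d / 2) t0).
    assert (Ht' : m < t' <= t0 /\ t' <= m + d / 2).
    { unfold t'; repeat split; [apply Rmin_glb_lt; lra| apply Rmin_r| apply Rmin_l]. }
    enough (HP : P t') by (specialize (Hub t' HP); lra).
    split; [lra|]. intros s Hs. destruct (Rlt_dec s m); [apply Hleft; lra|].
    apply Hnear; [lra|]. apply Rabs_def1; lra.
  - exists m. repeat split; auto.
    + destruct (Req_dec a m); [subst; lra| lra].
    + destruct (Req_dec m t0); [subst; lra| lra].
  - exfalso.
    assert (Hc' : continuous_on_closed (fun t => -1 * f t) a b)
      by now apply continuous_on_closed_scal.
    destruct (continuous_on_closed_neg_near a b _ m Hc' ltac:(lra) ltac:(lra))
      as [d [Hd Hnear]].
    assert (Ham' : a < m) by (destruct (Req_dec a m); [subst; lra| lra]).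
    set (s := Rmax a (m - d / 2)).
    assert (Hs : a <= s < m /\ m - d / 2 <= s).
    { unfold s; repeat split; [apply Rmax_l| apply Rmax_lub_lt; lra| apply Rmax_r]. }
    specialize (Hnear s ltac:(lra) ltac:(apply Rabs_def1; lra)).
    specialize (Hleft s ltac:(lra)). lra.
Qed.

Lemma nonpos_of_no_first_zero (f : R -> R) a b :
  continuous_on_closed f a b -> f a < 0 ->
  (forall t1, a < t1 < b -> f t1 = 0 -> (forall s, a <= s < t1 -> f s < 0) -> False) ->
  forall t, a <= t <= b -> f t <= 0.
Proof.
  intros Hc Ha Hno t Ht. destruct (Rle_dec (f t) 0) as [|Hpos]; auto.
  destruct (first_zero f a b t Hc Ha Ht ltac:(lra)) as [t1 [Ht1 [Hz Hbefore]]].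
  destruct (Hno t1 ltac:(lra) Hz Hbefore).
Qed.

Lemma derive_le_of_left_increments (u w : R -> R) (t du dw : R) :
  is_derive u t du -> is_derive w t dw ->
  (exists d, 0 < d /\ forall h, 0 < h < d -> w t - w (t - h) <= u t - u (t - h)) ->
  dw <= du.
Proof.
  intros Hu Hw [d [Hd H]].
  destruct (Rle_dec dw du) as [|Hn]; auto. exfalso.
  assert (Hphi := is_derive_Rminus u w t du dw Hu Hw).
  apply is_derive_Reals in Hphi.
  destruct (Hphi ((dw - du) / 2) ltac:(lra)) as [[e He] Hlim]; simpl in Hlim.
  set (h := Rmin (d / 2) (e / 2)).
  assert (Hh : 0 < h <= d / 2 /\ h <= e / 2).
  { unfold h; repeat split; [apply Rmin_glb_lt; lra| apply Rmin_l| apply Rmin_r]. }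
  specialize (Hlim (- h) ltac:(lra)
                ltac:(rewrite Rabs_Ropp, Rabs_right by lra; lra)).
  apply Rabs_def2 in Hlim. specialize (H h ltac:(lra)).
  replace (t + - h) with (t - h) in Hlim by ring.
  enough (0 <= (u (t - h) - w (t - h) - (u t - w t)) / - h) by lra.
  replace ((u (t - h) - w (t - h) - (u t - w t)) / - h)
    with ((u t - u (t - h) - (w t - w (t - h))) * / h) by (field; lra).
  apply Rmult_le_pos; [lra| apply Rlt_le, Rinv_0_lt_compat; lra].
Qed.

Lemma upper_barrier (g B dg dB : R -> R) a b :
  continuous_on_closed g a b -> continuous_on_closed B a b ->
  (forall t, a < t < b -> is_derive g t (dg t)) ->
  (forall t, a < t < b -> is_derive B t (dB t)) ->
  g a < B a -> (forall t, a < t < b -> g t = B t -> dg t < dB t) ->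
  forall t, a <= t <= b -> g t <= B t.
Proof.
  intros Hcg HcB Hdg HdB Ha Htouch t Ht.
  enough (g t - B t <= 0) by lra.
  apply (nonpos_of_no_first_zero (fun t => g t - B t) a b); [| lra | | exact Ht].
  - now apply continuous_on_closed_minus.
  - intros t1 Ht1 Hz Hbefore.
    assert (dB t1 <= dg t1).
    { apply (derive_le_of_left_increments g B t1); auto.
      exists (t1 - a); split; [lra|]. intros h Hh.
      specialize (Hbefore (t1 - h) ltac:(lra)). lra. }
    specialize (Htouch t1 Ht1 ltac:(lra)). lra.
Qed.

Lemma le_of_derive_nonneg_closed (f df : R -> R) a b :
  continuous_on_closed f a b ->
  (forall t, a < t < b -> is_derive f t (df t)) -> (forall t, a < t < b -> 0 <= df t) ->
  forall t, a <= t <= b -> f a <= f t.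
Proof.
  intros Hc Hd Hp t Ht. apply le_epsilon. intros eps Heps.
  set (eta := eps / (t - a + 1)).
  assert (Heta : 0 < eta) by (apply Rdiv_lt_0_compat; lra).
  assert (Hlin : f a - eta * (t - a) - eta <= f t).
  { apply (upper_barrier (fun y => f a - eta * (y - a) - eta) f (fun _ => - eta) df a b);
      auto; try lra.
    - apply continuous_on_closed_derive. intros; auto_derive; auto.
    - intros; auto_derive; auto; ring.
    - intros y Hy _. specialize (Hp y Hy). lra. }
  replace eps with (eta * (t - a) + eta) by (unfold eta; field; lra). lra.
Qed.

(** * Weighted sums and exponential moments *)

Lemma wsum_ext f g v k0 : (forall k, f k = g k) -> wsum f v k0 = wsum g v k0.
Proof. intros H; revert k0; induction v; intros k0; simpl; [|rewrite H, IHv]; auto. Qed.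

Lemma wsum_scal c f v k0 : wsum (fun k => c * f k) v k0 = c * wsum f v k0.
Proof. revert k0; induction v; intros k0; simpl; [|rewrite IHv]; ring. Qed.

Lemma wsum_derive (f df : nat -> R -> R) v k0 x :
  (forall k, is_derive (f k) x (df k x)) ->
  is_derive (fun y => wsum (fun k => f k y) v k0) x (wsum (fun k => df k x) v k0).
Proof.
  intros Hd. revert k0. induction v as [|a v IH]; intros k0; simpl.
  - exact (@is_derive_const R_AbsRing R_NormedModule 0 x).
  - apply (is_derive_plus (fun y => a * f k0 y) (fun y => wsum (fun k => f k y) v (S k0))).
    + apply (is_derive_scal (f k0) x a), Hd.
    + apply IH.
Qed.

Lemma wsum_le f g v k0 : in_Nstar v ->
  (forall k, (k0 <= k < k0 + length v)%nat -> f k <= g k) -> wsum f v k0 <= wsum g v k0.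
Proof.
  intros Hv; revert k0; induction Hv as [|a v Ha _ IH]; intros k0 H; simpl; [lra|].
  assert (f k0 <= g k0) by (apply H; simpl; lia).
  assert (wsum f v (S k0) <= wsum g v (S k0)) by (apply IH; intros k Hk; apply H; simpl; lia).
  nra.
Qed.

Lemma wsum_nonneg f v k0 : in_Nstar v ->
  (forall k, (k0 <= k < k0 + length v)%nat -> 0 <= f k) -> 0 <= wsum f v k0.
Proof.
  intros Hv; revert k0; induction Hv as [|a v Ha _ IH]; intros k0 H; simpl; [lra|].
  assert (0 <= f k0) by (apply H; simpl; lia).
  assert (0 <= wsum f v (S k0)) by (apply IH; intros k Hk; apply H; simpl; lia).
  nra.
Qed.

Lemma wsum_pos f v k0 : in_Nstar v -> Nstar_nonzero v ->
  (forall k, (k0 <= k < k0 + length v)%nat -> 0 < f k) -> 0 < wsum f v k0.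
Proof.
  intros Hv; revert k0; induction Hv as [|a v Ha Hv IH]; intros k0 [b [Hb Hb0]] H;
    [destruct Hb|]; simpl.
  assert (0 < f k0) by (apply H; simpl; lia).
  assert (Hrest : forall k, (S k0 <= k < S k0 + length v)%nat -> 0 < f k)
    by (intros k Hk; apply H; simpl; lia).
  assert (0 <= wsum f v (S k0)) by (apply wsum_nonneg; auto; intros k Hk; now apply Rlt_le, Hrest).
  destruct Hb as [->|Hb].
  - assert (0 < b) by lra. nra.
  - assert (0 < wsum f v (S k0)) by (apply IH; [now exists b| exact Hrest]). nra.
Qed.

Definition moment (v : list R) (j : nat) (x : R) : R :=
  wsum (fun k => INR k ^ j * exp (- INR k * x)) v 1.

Definition max_index (v : list R) : R := INR (length v).

Lemma moment_derive v j x : is_derive (moment v j) x (- moment v (S j) x).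
Proof.
  unfold moment. rewrite <- (Rmult_1_l (wsum _ v 1)), Ropp_mult_distr_l, <- wsum_scal.
  apply (wsum_derive (fun k y => INR k ^ j * exp (- INR k * y))
                     (fun k y => -1 * (INR k ^ S j * exp (- INR k * y)))).
  intros k. auto_derive; auto. simpl; ring.
Qed.

Lemma moment_continuous v j x : continuity_pt (moment v j) x.
Proof. apply continuity_pt_ex_derive. eexists; apply moment_derive. Qed.

Lemma U0_derive v x : is_derive (U0 v) x (- moment v 1 x).
Proof.
  unfold U0, moment. rewrite <- (Rmult_1_l (wsum _ v 1)), Ropp_mult_distr_l, <- wsum_scal.
  apply (wsum_derive (fun k y => exp (- INR k * y) - 1)
                     (fun k y => -1 * (INR k ^ 1 * exp (- INR k * y)))).
  intros k. auto_derive; auto. simpl; ring.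
Qed.

Lemma Derive_U0 v x : Derive (U0 v) x = - moment v 1 x.
Proof. apply is_derive_unique, U0_derive. Qed.

Lemma Derive_n_U0_2 v x : Derive_n (U0 v) 2 x = moment v 2 x.
Proof.
  simpl. rewrite (Derive_ext _ (fun y => - moment v 1 y)) by apply Derive_U0.
  apply is_derive_unique. rewrite <- (Ropp_involutive (moment v 2 x)).
  apply (is_derive_opp (moment v 1)), moment_derive.
Qed.

Lemma m1_moment v : m1 v = moment v 1 0.
Proof. unfold m1, moment. apply wsum_ext. intros k. rewrite Rmult_0_r, exp_0. ring. Qed.

Section Moments.
Variable v : list R.
Hypothesis Hv : in_Nstar v.
Hypothesis Hn : Nstar_nonzero v.

Lemma moment_pos j x : 0 < moment v j x.
Proof.
  apply wsum_pos; auto. intros k Hk.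
  apply Rmult_lt_0_compat; [apply pow_lt, lt_0_INR; lia| apply exp_pos].
Qed.

Lemma m1_pos : 0 < m1 v.
Proof. rewrite m1_moment; apply moment_pos. Qed.

Lemma max_index_ge_1 : 1 <= max_index v.
Proof.
  destruct Hn as [a [Ha _]]. unfold max_index. destruct v; [destruct Ha|].
  apply (le_INR 1); simpl; lia.
Qed.

Lemma moment_le_succ j x : moment v j x <= moment v (S j) x.
Proof.
  apply wsum_le; auto. intros k Hk. simpl.
  assert (1 <= INR k) by (apply (le_INR 1); lia).
  assert (0 <= INR k ^ j * exp (- INR k * x))
    by (apply Rmult_le_pos; [apply pow_le; lra| apply Rlt_le, exp_pos]).
  nra.
Qed.

Lemma moment_succ_le j x : moment v (S j) x <= max_index v * moment v j x.
Proof.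
  unfold moment. rewrite <- wsum_scal. apply wsum_le; auto. intros k Hk. simpl.
  assert (INR k <= max_index v) by (apply le_INR; lia).
  assert (0 <= INR k ^ j * exp (- INR k * x))
    by (apply Rmult_le_pos; [apply pow_le, pos_INR| apply Rlt_le, exp_pos]).
  nra.
Qed.

(* Every index k is at least 1, so e^{-kx} compares with e^{-x} according to the sign of x. *)
Lemma m1_exp_le_moment1 x : x <= 0 -> m1 v * exp (- x) <= moment v 1 x.
Proof.
  intros Hx. rewrite m1_moment. unfold moment. rewrite Rmult_comm, <- wsum_scal.
  apply wsum_le; auto. intros k Hk. rewrite Rmult_0_r, exp_0.
  assert (1 <= INR k) by (apply (le_INR 1); lia).
  assert (exp (- x) <= exp (- INR k * x)) by (apply exp_le_compat; nra).
  simpl. nra.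
Qed.

Lemma moment1_le_m1_exp x : 0 <= x -> moment v 1 x <= m1 v * exp (- x).
Proof.
  intros Hx. rewrite m1_moment. unfold moment. rewrite Rmult_comm, <- wsum_scal.
  apply wsum_le; auto. intros k Hk. rewrite Rmult_0_r, exp_0.
  assert (1 <= INR k) by (apply (le_INR 1); lia).
  assert (exp (- INR k * x) <= exp (- x)) by (apply exp_le_compat; nra).
  simpl. nra.
Qed.

Lemma inv_moment1_surjective y : 0 < y -> exists x, / moment v 1 x = y.
Proof.
  intros Hy. pose proof m1_pos as Hm.
  set (A := Rabs (ln (y * m1 v))).
  assert (HA : 0 <= A) by apply Rabs_pos.
  assert (Hexp : exp (ln (y * m1 v)) = y * m1 v) by (apply exp_ln; nra).
  assert (Hlo : / y <= moment v 1 (- A)).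
  { eapply Rle_trans; [| apply m1_exp_le_moment1; lra].
    rewrite Ropp_involutive.
    assert (1 <= exp A * (y * m1 v)).
    { rewrite <- Hexp, <- exp_plus, <- exp_0. apply exp_le_compat.
      pose proof (Rle_abs (- ln (y * m1 v))). rewrite Rabs_Ropp in *. unfold A. lra. }
    apply (Rmult_le_reg_l y); [lra|]. rewrite Rinv_r by lra. nra. }
  assert (Hhi : moment v 1 A <= / y).
  { eapply Rle_trans; [apply moment1_le_m1_exp, Rabs_pos|].
    assert (exp (- A) * (y * m1 v) <= 1).
    { rewrite <- Hexp, <- exp_plus, <- exp_0. apply exp_le_compat.
      pose proof (Rle_abs (ln (y * m1 v))). unfold A. lra. }
    apply (Rmult_le_reg_l y); [lra|]. rewrite Rinv_r by lra. nra. }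
  destruct (IVT_gen (moment v 1) (- A) A (/ y) (moment_continuous v 1)) as [x [_ Hx]].
  - split; [apply Rle_trans with (2 := Hhi), Rmin_r| apply Rle_trans with (1 := Hlo), Rmax_l].
  - exists x. rewrite Hx. apply Rinv_inv.
Qed.

End Moments.

(** * The critical core *)

(* With s_j = moment v j x and u = 1 / s1: the left side is the x-derivative of
   [1 / E(u) = s2 u^3], and [s2 u^2] that of [u]. *)
Lemma core_slope_bound N S s1 s2 s3 : 0 < s1 -> 0 < s2 -> 0 < s3 ->
  s2 <= N * s1 -> s3 <= N * s2 -> / s1 <= S ->
  Rabs (- s3 * (/ s1) ^ 3 + 3 * s2 ^ 2 * (/ s1) ^ 4) <= 4 * N * S * (s2 * (/ s1) ^ 2).
Proof.
  intros H1 H2 H3 H21 H32 HS. set (u := / s1) in *.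
  assert (Hu : 0 < u) by (apply Rinv_0_lt_compat; lra).
  assert (Hsu : s1 * u = 1) by (apply Rinv_r; lra).
  assert (Hp : 0 < s2 * u ^ 2) by (apply Rmult_lt_0_compat; [lra| apply pow_lt; lra]).
  assert (HN : s2 * u <= N) by nra.
  assert (Ha : 0 <= s3 * u ^ 3 <= N * S * (s2 * u ^ 2)).
  { split; [apply Rmult_le_pos; [lra| apply pow_le; lra]|].
    replace (s3 * u ^ 3) with (s3 * u * u ^ 2) by ring.
    assert (s3 * u <= N * s2 * u) by nra.
    assert (s3 * u * u ^ 2 <= N * u * (s2 * u ^ 2)).
    { replace (N * u * (s2 * u ^ 2)) with (N * s2 * u * u ^ 2) by ring.
      apply Rmult_le_compat_r; [apply pow_le|]; lra. }
    assert (0 <= N) by nra.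
    assert (N * u * (s2 * u ^ 2) <= N * S * (s2 * u ^ 2)) by (apply Rmult_le_compat_r; nra).
    lra. }
  assert (Hb : 0 <= 3 * s2 ^ 2 * u ^ 4 <= 3 * N * S * (s2 * u ^ 2)).
  { split; [apply Rmult_le_pos; [nra| apply pow_le; lra]|].
    replace (3 * s2 ^ 2 * u ^ 4) with (3 * (s2 * u ^ 2) * (s2 * u * u)) by ring.
    replace (3 * N * S * (s2 * u ^ 2)) with (3 * (s2 * u ^ 2) * (N * S)) by ring.
    apply Rmult_le_compat_l; [lra|].
    apply Rmult_le_compat; nra. }
  apply Rabs_le. lra.
Qed.

Section CriticalCore.
Variables (v : list R) (E : R -> R).
Hypothesis Hv : in_Nstar v.
Hypothesis Hn : Nstar_nonzero v.
Hypothesis HE : is_critical_core v E.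

Lemma inv_core_moment x : / E (/ moment v 1 x) = moment v 2 x * (/ moment v 1 x) ^ 3.
Proof.
  pose proof (HE x) as H. rewrite Derive_U0, Derive_n_U0_2 in H.
  rewrite Ropp_involutive, Rinv_opp, Ropp_involutive in H. rewrite H.
  pose proof (moment_pos v Hv Hn 1 x). pose proof (moment_pos v Hv Hn 2 x).
  field. split; lra.
Qed.

Lemma inv_core_bounds y : 0 < y -> 0 < E y /\ y ^ 2 <= / E y <= max_index v * y ^ 2.
Proof.
  intros Hy. destruct (inv_moment1_surjective v Hv Hn y Hy) as [x <-].
  pose proof (inv_core_moment x) as Hinv. rewrite Hinv.
  pose proof (moment_pos v Hv Hn 1 x). pose proof (moment_pos v Hv Hn 2 x).
  pose proof (moment_le_succ v Hv 1 x). pose proof (moment_succ_le v Hv 1 x).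
  set (u := / moment v 1 x) in *.
  assert (Hu : 0 < u) by (apply Rinv_0_lt_compat; lra).
  assert (Hsu : moment v 1 x * u = 1) by (apply Rinv_r; lra).
  assert (Hu2 : 0 < u ^ 2) by (apply pow_lt; lra).
  replace (moment v 2 x * u ^ 3) with (moment v 2 x * u * u ^ 2) by ring.
  assert (1 <= moment v 2 x * u <= max_index v) by (split; nra).
  assert (0 < / E u) by (rewrite Hinv; apply Rmult_lt_0_compat; [lra| apply pow_lt; lra]).
  split; [rewrite <- (Rinv_inv (E u)); now apply Rinv_0_lt_compat|]. split; nra.
Qed.

Lemma inv_moment1_derive x :
  is_derive (fun y => / moment v 1 y) x (moment v 2 x * (/ moment v 1 x) ^ 2).
Proof.
  pose proof (moment_pos v Hv Hn 1 x).
  eapply is_derive_value; [| apply is_derive_inv; [apply moment_derive| lra]].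
  field. lra.
Qed.

Lemma inv_moment1_le x1 x2 : x1 <= x2 -> / moment v 1 x1 <= / moment v 1 x2.
Proof.
  intros H. apply (le_of_derive_nonneg (fun y => / moment v 1 y)
    (fun x => moment v 2 x * (/ moment v 1 x) ^ 2)); auto.
  - intros; apply inv_moment1_derive.
  - intros x _. apply Rmult_le_pos; [apply Rlt_le, moment_pos; auto| apply pow2_ge_0].
Qed.

Lemma inv_core_param_derive x :
  is_derive (fun y => moment v 2 y * (/ moment v 1 y) ^ 3) x
    (- moment v 3 x * (/ moment v 1 x) ^ 3 + 3 * moment v 2 x ^ 2 * (/ moment v 1 x) ^ 4).
Proof.
  pose proof (moment_pos v Hv Hn 1 x).
  eapply is_derive_value;
    [| apply is_derive_Rmult;
       [apply moment_derive| apply is_derive_pow, inv_moment1_derive]].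
  simpl. field. lra.
Qed.

Lemma inv_core_lipschitz S y1 y2 : 0 < y1 <= S -> 0 < y2 <= S ->
  Rabs (/ E y1 - / E y2) <= 4 * max_index v * S * Rabs (y1 - y2).
Proof.
  intros H1 H2.
  assert (Hmono : forall x1 x2, x1 <= x2 -> / moment v 1 x2 <= S ->
    Rabs (/ E (/ moment v 1 x2) - / E (/ moment v 1 x1))
      <= 4 * max_index v * S * (/ moment v 1 x2 - / moment v 1 x1)).
  { intros x1 x2 H12 HS. rewrite !inv_core_moment.
    replace (4 * max_index v * S * (/ moment v 1 x2 - / moment v 1 x1))
      with (4 * max_index v * S * / moment v 1 x2 - 4 * max_index v * S * / moment v 1 x1)
      by ring.
    apply (Rabs_sub_le_of_derive_bound (fun y => moment v 2 y * (/ moment v 1 y) ^ 3)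
             (fun y => 4 * max_index v * S * / moment v 1 y)
             (fun x => - moment v 3 x * (/ moment v 1 x) ^ 3
                       + 3 * moment v 2 x ^ 2 * (/ moment v 1 x) ^ 4)
             (fun x => 4 * max_index v * S * (moment v 2 x * (/ moment v 1 x) ^ 2)) x1 x2);
      auto.
    - intros x _. apply inv_core_param_derive.
    - intros x _. apply is_derive_scal, inv_moment1_derive.
    - intros x Hx. apply core_slope_bound; try apply moment_pos; auto;
        try apply moment_succ_le; auto.
      apply Rle_trans with (2 := HS), inv_moment1_le; lra. }
  destruct (inv_moment1_surjective v Hv Hn y1 (proj1 H1)) as [x1 <-].
  destruct (inv_moment1_surjective v Hv Hn y2 (proj1 H2)) as [x2 <-].
  destruct (Rle_dec x1 x2) as [H|H].
  - pose proof (inv_moment1_le x1 x2 H).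
    rewrite Rabs_minus_sym, (Rabs_minus_sym (/ moment v 1 x1)),
      (Rabs_right (/ moment v 1 x2 - / moment v 1 x1)) by lra.
    apply Hmono; lra.
  - pose proof (inv_moment1_le x2 x1 ltac:(lra)).
    rewrite (Rabs_right (/ moment v 1 x1 - / moment v 1 x2)) by lra. apply Hmono; lra.
Qed.

End CriticalCore.

(** * The solution w* *)

Section Wstar.
Variables (v : list R) (E : R -> R) (T lam : R) (w : R -> R).
Hypothesis Hv : in_Nstar v.
Hypothesis Hn : Nstar_nonzero v.
Hypothesis HE : is_critical_core v E.
Hypothesis HT : 0 < T.
Hypothesis Hlam : 0 < lam <= 1.
Hypothesis Hw : is_wstar_solution v E lam T w.

Definition w_init := / m1 v.
Definition invE y := / E y.
Definition shifted t := t + w t.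
Definition quasi_eq t := lam * invE (shifted t).

Lemma w_init_pos : 0 < w_init.
Proof. apply Rinv_0_lt_compat, m1_pos; auto. Qed.

Lemma invE_bounds y : 0 < y -> y ^ 2 <= invE y <= max_index v * y ^ 2.
Proof. intros Hy. apply inv_core_bounds; auto. Qed.

Lemma invE_pos y : 0 < y -> 0 < invE y.
Proof. intros Hy. pose proof (invE_bounds y Hy). pose proof (pow_lt y 2 Hy). lra. Qed.

Lemma w_continuous a b : 0 <= a -> b <= T -> continuous_on_closed w a b.
Proof. intros Ha Hb. apply (continuous_on_closed_subinterval 0 T); auto. apply Hw. Qed.

Lemma w_at_0 : w 0 = w_init.
Proof. apply Hw. Qed.

Lemma w_pos t : 0 <= t <= T -> 0 < w t.
Proof.
  intros Ht. destruct Hw as [Hc [Hw0 [Hne _]]].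
  enough (- w t <= 0) by (destruct (Hne t Ht); lra).
  apply (nonpos_of_no_first_zero (fun t => - w t) 0 T); auto.
  - apply (continuous_on_closed_ext 0 T (fun t => -1 * w t)); [intros; ring|].
    now apply continuous_on_closed_scal.
  - rewrite Hw0. pose proof w_init_pos. unfold w_init in *. lra.
  - intros t1 Ht1 Hz _. apply (proj1 (Hne t1 ltac:(lra))). lra.
Qed.

Lemma shifted_pos t : 0 <= t <= T -> 0 < shifted t.
Proof. intros Ht. apply Hw; auto. Qed.

Lemma w_derive t : 0 < t < T -> is_derive w t (quasi_eq t / w t - 1).
Proof.
  intros Ht. destruct Hw as [_ [_ [_ Hd]]].
  pose proof (w_pos t ltac:(lra)).
  destruct (inv_core_bounds v E Hv Hn HE (shifted t)) as [HEpos _]; [apply shifted_pos; lra|].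
  eapply is_derive_value; [| apply Hd; auto]. unfold quasi_eq, invE, shifted in *. field. lra.
Qed.

Lemma shifted_derive t : 0 < t < T -> is_derive shifted t (quasi_eq t / w t).
Proof.
  intros Ht. eapply is_derive_value;
    [| apply is_derive_Rplus; [apply is_derive_id| apply w_derive, Ht]].
  simpl. unfold one. simpl. ring.
Qed.

Lemma shifted_continuous a b : 0 <= a -> b <= T -> continuous_on_closed shifted a b.
Proof.
  intros Ha Hb. apply continuous_on_closed_plus; [| now apply w_continuous].
  apply continuous_on_closed_derive. intros; auto_derive; auto.
Qed.

Lemma shifted_le p q : 0 <= p -> p <= q -> q <= T -> shifted p <= shifted q.
Proof.
  intros Hp Hpq Hq.
  apply (le_of_derive_nonneg_closed shifted (fun t => quasi_eq t / w t) p q);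
    auto; try lra.
  - now apply shifted_continuous.
  - intros t Ht. apply shifted_derive; lra.
  - intros t Ht. pose proof (w_pos t ltac:(lra)).
    pose proof (invE_pos (shifted t) (shifted_pos t ltac:(lra))).
    apply Rlt_le, Rdiv_lt_0_compat; [unfold quasi_eq; nra| lra].
Qed.

Lemma w_init_le_shifted t : 0 <= t <= T -> w_init <= shifted t.
Proof.
  intros Ht. replace w_init with (shifted 0) by (unfold shifted; rewrite w_at_0; ring).
  apply shifted_le; lra.
Qed.

Definition w_max := 2 * (T + w_init) * exp ((4 * max_index v + 1) * T).
Definition shift_max := T + w_max.
Definition invE_max := max_index v * shift_max ^ 2.
Definition w_min_rate := Rmin w_init (w_init ^ 2) / 2.

Lemma w_max_pos : 0 < w_max.
Proof. pose proof w_init_pos. apply Rmult_lt_0_compat; [lra| apply exp_pos]. Qed.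

Lemma invE_max_pos : 0 < invE_max.
Proof.
  pose proof w_max_pos. pose proof (max_index_ge_1 v Hv Hn).
  apply Rmult_lt_0_compat; [lra| apply pow_lt; unfold shift_max; lra].
Qed.

Lemma w_min_rate_pos : 0 < w_min_rate.
Proof.
  pose proof w_init_pos. apply Rdiv_lt_0_compat; [apply Rmin_glb_lt; [| apply pow_lt]|]; lra.
Qed.

(* At a touching point of the exponential barrier, t <= T <= w t, so
   invE (t + w t) <= 4 N (w t)^2 and the slope of w is below (4 N + 1) w t. *)
Lemma w_le_max t : 0 <= t <= T -> w t <= w_max.
Proof.
  intros Ht. pose proof w_init_pos. pose proof (max_index_ge_1 v Hv Hn).
  set (k := 4 * max_index v + 1).
  set (B := fun t => 2 * (T + w_init) * exp (k * t)).
  enough (HB : w t <= B t).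
  { apply Rle_trans with (1 := HB). unfold B, w_max.
    apply Rmult_le_compat_l; [lra|]. apply exp_le_compat, Rmult_le_compat_l; unfold k; lra. }
  apply (upper_barrier w B (fun t => quasi_eq t / w t - 1) (fun t => k * B t) 0 T);
    auto; try lra.
  - now apply w_continuous.
  - apply continuous_on_closed_derive. intros; unfold B; auto_derive; auto.
  - apply w_derive.
  - intros t' _. unfold B. auto_derive; auto. ring.
  - rewrite w_at_0. unfold B. rewrite Rmult_0_r, exp_0. lra.
  - intros t1 Ht1 Htouch.
    assert (Hw1 : 0 < w t1) by (apply w_pos; lra).
    assert (HTw : T <= w t1).
    { rewrite Htouch. unfold B.
      pose proof (exp_le_compat 0 (k * t1) ltac:(unfold k; nra)). rewrite exp_0 in *. nra. }
    assert (Hs : 0 < shifted t1 <= 2 * w t1) by (split; [apply shifted_pos| unfold shifted]; lra).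
    assert (HG : quasi_eq t1 <= 4 * max_index v * w t1 * w t1).
    { unfold quasi_eq. pose proof (invE_bounds (shifted t1) (proj1 Hs)).
      pose proof (invE_pos (shifted t1) (proj1 Hs)).
      assert (shifted t1 ^ 2 <= 4 * w t1 * w t1) by nra.
      apply Rle_trans with (invE (shifted t1)); [nra|].
      apply Rle_trans with (max_index v * shifted t1 ^ 2); [lra|].
      pose proof (max_index_ge_1 v Hv Hn). nra. }
    assert (quasi_eq t1 / w t1 <= 4 * max_index v * w t1) by (apply Rle_div_l; nra).
    rewrite <- Htouch. unfold k. nra.
Qed.

Lemma shifted_le_max t : 0 <= t <= T -> shifted t <= shift_max.
Proof. intros Ht. unfold shifted, shift_max. pose proof (w_le_max t Ht). lra. Qed.

Lemma invE_le_max y : 0 < y <= shift_max -> invE y <= invE_max.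
Proof.
  intros Hy. pose proof (invE_bounds y (proj1 Hy)). pose proof (max_index_ge_1 v Hv Hn).
  unfold invE_max. apply Rle_trans with (max_index v * y ^ 2); [lra|].
  apply Rmult_le_compat_l; [lra|]. apply pow_incr; lra.
Qed.

Lemma invE_shifted_le t : 0 <= t <= T -> invE (shifted t) <= invE_max.
Proof. intros Ht. apply invE_le_max. split; [apply shifted_pos| apply shifted_le_max]; auto. Qed.

Lemma quasi_eq_bounds t : 0 <= t <= T -> 0 <= quasi_eq t <= invE_max * lam.
Proof.
  intros Ht. unfold quasi_eq. pose proof (invE_shifted_le t Ht).
  pose proof (invE_pos (shifted t) (shifted_pos t Ht)). split; nra.
Qed.

Lemma w_slope_le t : 0 < t < T -> quasi_eq t / w t - 1 <= invE_max * lam / w t - 1.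
Proof.
  intros Ht. pose proof (w_pos t ltac:(lra)). pose proof (quasi_eq_bounds t ltac:(lra)).
  apply Rplus_le_compat_r, Rmult_le_compat_r; [apply Rlt_le, Rinv_0_lt_compat|]; lra.
Qed.

(* Since t + w t >= w_init, at the level lam * w_min_rate the slope of w is at least 1. *)
Lemma w_ge_min t : 0 <= t <= T -> lam * w_min_rate <= w t.
Proof.
  intros Ht. pose proof w_init_pos. pose proof w_min_rate_pos.
  pose proof (Rmin_l w_init (w_init ^ 2)). pose proof (Rmin_r w_init (w_init ^ 2)).
  assert (Hb1 : w_min_rate <= w_init / 2) by (unfold w_min_rate; lra).
  assert (Hb2 : w_min_rate <= w_init ^ 2 / 2) by (unfold w_min_rate; lra).
  apply (upper_barrier (fun _ => lam * w_min_rate) w (fun _ => 0)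
           (fun t => quasi_eq t / w t - 1) 0 T); auto; try lra.
  - apply continuous_on_closed_derive. intros; auto_derive; auto.
  - now apply w_continuous.
  - intros t' _; auto_derive; auto.
  - apply w_derive.
  - rewrite w_at_0. nra.
  - intros t1 Ht1 Htouch.
    pose proof (w_init_le_shifted t1 ltac:(lra)).
    pose proof (invE_bounds (shifted t1) ltac:(lra)).
    assert (w_init ^ 2 <= shifted t1 ^ 2) by (apply pow_incr; lra).
    assert (2 <= quasi_eq t1 / w t1) by (rewrite <- Htouch; apply Rle_div_r; unfold quasi_eq; nra).
    lra.
Qed.

(* A supersolution of u' = invE_max lam / u - 1 on [0, w_init], started at w_init + lam:
   its slope uses the smaller quantity w_init - t + lam in place of u. *)
Definition transient_bound t :=
  w_init - t + lam + invE_max * lam * (ln (w_init + lam) - ln (w_init - t + lam)).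

Lemma w_le_transient_bound : w_init <= T ->
  forall t, 0 <= t <= w_init -> w t <= transient_bound t.
Proof.
  intros HyT t Ht. pose proof w_init_pos. pose proof invE_max_pos.
  apply (upper_barrier w transient_bound (fun t => quasi_eq t / w t - 1)
           (fun t => -1 + invE_max * lam / (w_init - t + lam)) 0 w_init); auto.
  - now apply w_continuous.
  - apply continuous_on_closed_derive. intros t' Ht'. unfold transient_bound. auto_derive. lra.
  - intros t' Ht'. apply w_derive. lra.
  - intros t' Ht'. unfold transient_bound. auto_derive; [lra|]. field. lra.
  - rewrite w_at_0. unfold transient_bound. rewrite Rminus_0_r, Rminus_diag, Rmult_0_r. lra.
  - intros t1 Ht1 Htouch. pose proof (w_slope_le t1 ltac:(lra)).
    assert (ln (w_init - t1 + lam) < ln (w_init + lam)) by (apply ln_increasing; lra).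
    assert (Hgap : w_init - t1 + lam < w t1).
    { rewrite Htouch. unfold transient_bound. assert (0 < invE_max * lam) by nra. nra. }
    assert (invE_max * lam / w t1 < invE_max * lam / (w_init - t1 + lam)).
    { apply Rmult_lt_compat_l; [nra|]. apply Rinv_lt_contravar; nra. }
    lra.
Qed.

Definition transient_height := lam + invE_max * lam * (ln (w_init + lam) - ln lam).
Definition t_relax := w_init + 3 * transient_height.

Lemma lam_le_transient_height : lam <= transient_height.
Proof.
  pose proof w_init_pos. pose proof invE_max_pos.
  assert (ln lam < ln (w_init + lam)) by (apply ln_increasing; lra).
  assert (0 <= invE_max * lam * (ln (w_init + lam) - ln lam)) by (apply Rmult_le_pos; nra).
  unfold transient_height. lra.
Qed.

(* After t = w_init the slope of w stays below -1/3 as long as w exceeds 2 invE_max lam. *)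
Lemma w_at_t_relax : t_relax <= T -> w t_relax <= 2 * invE_max * lam.
Proof.
  intros HtT. pose proof w_init_pos. pose proof invE_max_pos. pose proof lam_le_transient_height.
  assert (HyT : w_init <= t_relax) by (unfold t_relax; lra).
  set (Q := fun t => transient_height + 2 * invE_max * lam - (t - w_init) / 3).
  enough (w t_relax <= Q t_relax) by (unfold Q, t_relax in *; lra).
  apply (upper_barrier w Q (fun t => quasi_eq t / w t - 1) (fun _ => - / 3)
           w_init t_relax); try lra.
  - apply w_continuous; lra.
  - apply continuous_on_closed_derive. intros; unfold Q; auto_derive; auto.
  - intros t' Ht'. apply w_derive. lra.
  - intros t' _. unfold Q. auto_derive; auto. field.
  - pose proof (w_le_transient_bound ltac:(lra) w_init ltac:(lra)) as Hb.
    unfold transient_bound in Hb. replace (w_init - w_init + lam) with lam in Hb by ring.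
    unfold Q. rewrite Rminus_diag. unfold transient_height. nra.
  - intros t1 Ht1 Htouch. pose proof (w_slope_le t1 ltac:(lra)).
    assert (Hgap : 2 * invE_max * lam < w t1) by (rewrite Htouch; unfold Q, t_relax in *; lra).
    assert (invE_max * lam / w t1 <= / 2) by (apply Rle_div_l; nra).
    lra.
Qed.

Lemma w_le_after_relax : t_relax <= T -> forall t, t_relax <= t <= T -> w t <= 4 * invE_max * lam.
Proof.
  intros HtT t Ht.
  pose proof w_init_pos. pose proof invE_max_pos. pose proof lam_le_transient_height.
  pose proof (w_at_t_relax HtT).
  apply (upper_barrier w (fun _ => 4 * invE_max * lam) (fun t => quasi_eq t / w t - 1)
           (fun _ => 0) t_relax T); auto.
  - apply w_continuous; unfold t_relax in *; lra.
  - apply continuous_on_closed_derive. intros; auto_derive; auto.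
  - intros t' Ht'. apply w_derive. unfold t_relax in *; lra.
  - intros t' _. auto_derive; auto.
  - nra.
  - intros t1 Ht1 Htouch. pose proof (w_slope_le t1 ltac:(unfold t_relax in *; lra)).
    assert (invE_max * lam / w t1 <= / 4) by (rewrite Htouch; apply Rle_div_l; nra).
    lra.
Qed.

Definition invE_lip := 4 * max_index v * shift_max.
Definition C_err := 4 * invE_lip * invE_max ^ 2 / w_min_rate + 1.
Definition relax_time := 8 * (invE_max * lam).
Definition envelope t :=
  C_err * lam ^ 2 + 6 * invE_max * lam * exp (- (t - t_relax) / relax_time).

Lemma invE_lip_pos : 0 < invE_lip.
Proof.
  pose proof (max_index_ge_1 v Hv Hn). pose proof w_max_pos.
  apply Rmult_lt_0_compat; [lra| unfold shift_max; lra].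
Qed.

Lemma invE_lipschitz_on y1 y2 : 0 < y1 <= shift_max -> 0 < y2 <= shift_max ->
  Rabs (invE y1 - invE y2) <= invE_lip * Rabs (y1 - y2).
Proof. intros H1 H2. now apply inv_core_lipschitz. Qed.

Lemma quasi_eq_lipschitz p q : 0 <= p <= T -> 0 <= q <= T ->
  Rabs (quasi_eq p - quasi_eq q) <= lam * invE_lip * Rabs (shifted p - shifted q).
Proof.
  intros Hp Hq. unfold quasi_eq. rewrite <- Rmult_minus_distr_l, Rabs_mult, Rabs_right by lra.
  rewrite Rmult_assoc. apply Rmult_le_compat_l; [lra|].
  apply invE_lipschitz_on; split; try apply shifted_pos; try apply shifted_le_max; auto.
Qed.

Lemma quasi_eq_continuous a b : 0 <= a -> b <= T -> continuous_on_closed quasi_eq a b.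
Proof.
  intros Ha Hb. apply (continuous_on_closed_lipschitz a b shifted _ (lam * invE_lip)).
  - pose proof invE_lip_pos. nra.
  - intros p q Hp Hq. apply quasi_eq_lipschitz; lra.
  - now apply shifted_continuous.
Qed.

Lemma envelope_derive t : is_derive envelope t (- (envelope t - C_err * lam ^ 2) / relax_time).
Proof.
  pose proof invE_max_pos. unfold envelope, relax_time.
  auto_derive; [nra|].
  replace (- (t + - t_relax) * / (8 * (invE_max * lam)))
    with (- (t - t_relax) / (8 * (invE_max * lam))) by (unfold Rdiv; ring).
  field. nra.
Qed.

Lemma C_err_ge_1 : 1 <= C_err.
Proof.
  pose proof invE_lip_pos. pose proof w_min_rate_pos. pose proof invE_max_pos.
  enough (0 < 4 * invE_lip * invE_max ^ 2 / w_min_rate) by (unfold C_err; lra).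
  apply Rdiv_lt_0_compat; [apply Rmult_lt_0_compat; [lra| apply pow_lt]|]; lra.
Qed.

Lemma envelope_gt t : C_err * lam ^ 2 < envelope t.
Proof.
  unfold envelope. pose proof invE_max_pos. pose proof (exp_pos (- (t - t_relax) / relax_time)).
  assert (0 < invE_max * lam) by nra. nra.
Qed.

(* Used at a touching point of the envelope [Bv], with [x = w t1], [q = invE_max lam]
   and [K] a bound on the drift term of quasi_eq. *)
Lemma relaxation_contradiction q x Bv Cl2 K : 0 < q -> 0 < x <= 4 * q -> 0 < Cl2 < Bv ->
  8 * q * K < 2 * Cl2 -> Bv / x - (Bv - Cl2) / (8 * q) <= K -> False.
Proof.
  intros Hq Hx HC HK H.
  assert (Bv / (4 * q) <= Bv / x) by (apply Rmult_le_compat_l; [| apply Rinv_le_contravar]; lra).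
  assert (Bv + Cl2 <= 8 * q * K).
  { replace (Bv + Cl2) with ((Bv / (4 * q) - (Bv - Cl2) / (8 * q)) * (8 * q)) by (field; lra).
    replace (8 * q * K) with (K * (8 * q)) by ring. apply Rmult_le_compat_r; lra. }
  lra.
Qed.

Lemma relax_drift_bound t : t_relax <= t <= T ->
  lam * invE_lip * (quasi_eq t / w t) <= lam * invE_lip * invE_max / w_min_rate.
Proof.
  intros Ht. pose proof lam_le_transient_height. pose proof w_init_pos.
  pose proof invE_lip_pos. pose proof w_min_rate_pos. pose proof invE_max_pos.
  assert (Ht' : 0 <= t <= T) by (unfold t_relax in *; lra).
  pose proof (quasi_eq_bounds t Ht'). pose proof (w_ge_min t Ht').
  replace (lam * invE_lip * invE_max / w_min_rate)
    with (lam * invE_lip * (invE_max * lam / (w_min_rate * lam))) by (field; lra).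
  apply Rmult_le_compat_l; [nra|].
  apply Rmult_le_compat; try lra.
  - apply Rlt_le, Rinv_0_lt_compat; nra.
  - apply Rinv_le_contravar; nra.
Qed.

Lemma relax_rate_dominates :
  8 * (invE_max * lam) * (lam * invE_lip * invE_max / w_min_rate) < 2 * (C_err * lam ^ 2).
Proof.
  pose proof w_min_rate_pos. pose proof invE_lip_pos. pose proof invE_max_pos.
  unfold C_err.
  replace (8 * (invE_max * lam) * (lam * invE_lip * invE_max / w_min_rate))
    with (2 * (4 * invE_lip * invE_max ^ 2 / w_min_rate * lam ^ 2)) by (field; lra).
  pose proof (pow_lt lam 2 ltac:(lra)). lra.
Qed.

Lemma quasi_eq_increment p q : 0 <= p <= q -> q <= T ->
  Rabs (quasi_eq q - quasi_eq p) <= lam * invE_lip * (shifted q - shifted p).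
Proof.
  intros Hp Hq. pose proof (shifted_le p q ltac:(lra) ltac:(lra) Hq).
  rewrite <- (Rabs_right (shifted q - shifted p)) by lra. apply quasi_eq_lipschitz; lra.
Qed.

Lemma envelope_at_t_relax : envelope t_relax = C_err * lam ^ 2 + 6 * invE_max * lam.
Proof. unfold envelope. rewrite Rminus_diag, Ropp_0, Rdiv_0_l, exp_0. ring. Qed.

Section Relaxation.
Hypothesis HtT : t_relax <= T.

Lemma relax_facts t : t_relax <= t <= T ->
  0 <= t <= T /\ 0 < w t <= 4 * invE_max * lam /\ 0 <= quasi_eq t <= invE_max * lam.
Proof.
  intros Ht. pose proof lam_le_transient_height. pose proof w_init_pos.
  assert (Ht' : 0 <= t <= T) by (unfold t_relax in *; lra).
  split; [exact Ht'| split; [split; [now apply w_pos| now apply w_le_after_relax]|]].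
  now apply quasi_eq_bounds.
Qed.

Lemma w_sub_quasi_eq_le t : t_relax <= t <= T -> w t - quasi_eq t <= envelope t.
Proof.
  intros Ht. pose proof invE_max_pos. pose proof invE_lip_pos.
  destruct (relax_facts t_relax ltac:(lra)) as [[Hr0 _] [[_ Hw0] Hq0]].
  enough (w t - quasi_eq t - envelope t <= 0) by lra.
  apply (nonpos_of_no_first_zero (fun t => w t - quasi_eq t - envelope t) t_relax T);
    [| | | exact Ht].
  - apply continuous_on_closed_minus; [apply continuous_on_closed_minus|].
    + apply w_continuous; lra.
    + apply quasi_eq_continuous; lra.
    + apply continuous_on_closed_derive. intros; eexists; apply envelope_derive.
  - pose proof (w_at_t_relax HtT). pose proof (envelope_gt t_relax).
    rewrite envelope_at_t_relax in *.
    pose proof C_err_ge_1. pose proof (pow_lt lam 2 ltac:(lra)). nra.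
  - intros t1 Ht1 Htouch Hbefore.
    destruct (relax_facts t1 ltac:(lra)) as [Ht1' [Hw1 Hq1]].
    assert (Hslope : - (envelope t1 - C_err * lam ^ 2) / relax_time
                     <= (quasi_eq t1 / w t1 - 1) + lam * invE_lip * (quasi_eq t1 / w t1)).
    { apply (derive_le_of_left_increments (fun t => w t + lam * invE_lip * shifted t) envelope t1).
      - apply is_derive_Rplus; [apply w_derive| apply is_derive_scal, shifted_derive]; lra.
      - apply envelope_derive.
      - exists (t1 - t_relax); split; [lra|]. intros h Hh.
        specialize (Hbefore (t1 - h) ltac:(lra)).
        assert (Hinc := quasi_eq_increment (t1 - h) t1 ltac:(unfold t_relax in *; lra) ltac:(lra)).
        apply Rabs_le_between in Hinc. lra. }
    apply (relaxation_contradiction (invE_max * lam) (w t1) (envelope t1) (C_err * lam ^ 2)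
             (lam * invE_lip * invE_max / w_min_rate)); try lra.
    + pose proof (envelope_gt t1). pose proof C_err_ge_1. pose proof (pow_lt lam 2 ltac:(lra)). nra.
    + apply relax_rate_dominates.
    + pose proof (relax_drift_bound t1 ltac:(lra)).
      assert (Hq : quasi_eq t1 / w t1 - 1 = - (envelope t1 / w t1)).
      { replace (quasi_eq t1) with (w t1 - envelope t1) by lra. field. lra. }
      rewrite Hq in Hslope.
      unfold relax_time in Hslope. lra.
Qed.

Lemma quasi_eq_sub_w_le t : t_relax <= t <= T -> quasi_eq t - w t <= envelope t.
Proof.
  intros Ht. pose proof invE_max_pos. pose proof invE_lip_pos.
  destruct (relax_facts t_relax ltac:(lra)) as [[Hr0 _] [[Hw0 _] Hq0]].
  enough (quasi_eq t - w t - envelope t <= 0) by lra.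
  apply (nonpos_of_no_first_zero (fun t => quasi_eq t - w t - envelope t) t_relax T);
    [| | | exact Ht].
  - apply continuous_on_closed_minus; [apply continuous_on_closed_minus|].
    + apply quasi_eq_continuous; lra.
    + apply w_continuous; lra.
    + apply continuous_on_closed_derive. intros; eexists; apply envelope_derive.
  - pose proof (envelope_gt t_relax). rewrite envelope_at_t_relax in *.
    pose proof C_err_ge_1. pose proof (pow_lt lam 2 ltac:(lra)). nra.
  - intros t1 Ht1 Htouch Hbefore.
    destruct (relax_facts t1 ltac:(lra)) as [Ht1' [Hw1 Hq1]].
    assert (Hslope : (quasi_eq t1 / w t1 - 1) + - (envelope t1 - C_err * lam ^ 2) / relax_time
                     <= lam * invE_lip * (quasi_eq t1 / w t1)).
    { apply (derive_le_of_left_increments (fun t => lam * invE_lip * shifted t)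
               (fun t => w t + envelope t) t1).
      - apply is_derive_scal, shifted_derive; lra.
      - apply is_derive_Rplus; [apply w_derive; lra| apply envelope_derive].
      - exists (t1 - t_relax); split; [lra|]. intros h Hh.
        specialize (Hbefore (t1 - h) ltac:(lra)).
        assert (Hinc := quasi_eq_increment (t1 - h) t1 ltac:(unfold t_relax in *; lra) ltac:(lra)).
        apply Rabs_le_between in Hinc. lra. }
    apply (relaxation_contradiction (invE_max * lam) (w t1) (envelope t1) (C_err * lam ^ 2)
             (lam * invE_lip * invE_max / w_min_rate)); try lra.
    + pose proof (envelope_gt t1). pose proof C_err_ge_1. pose proof (pow_lt lam 2 ltac:(lra)). nra.
    + apply relax_rate_dominates.
    + pose proof (relax_drift_bound t1 ltac:(lra)).
      assert (Hq : quasi_eq t1 / w t1 - 1 = envelope t1 / w t1).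
      { replace (quasi_eq t1) with (w t1 + envelope t1) by lra. field. lra. }
      rewrite Hq in Hslope.
      unfold relax_time in Hslope. lra.
Qed.

Lemma w_near_quasi_eq t : t_relax <= t <= T -> Rabs (w t - quasi_eq t) <= envelope t.
Proof.
  intros Ht. apply Rabs_le.
  pose proof (w_sub_quasi_eq_le t Ht). pose proof (quasi_eq_sub_w_le t Ht). lra.
Qed.

End Relaxation.

Lemma t_relax_delay : t_relax - w_init
  <= 3 * lam + 3 * invE_max * lam * w_init + 3 * invE_max * lam * ln (/ lam).
Proof.
  pose proof w_init_pos. pose proof invE_max_pos.
  assert (ln (w_init + lam) <= w_init).
  { rewrite <- (ln_exp w_init) at 2. apply ln_le; [lra|].
    pose proof (exp_ineq1_le w_init). lra. }
  rewrite ln_Rinv by lra. unfold t_relax, transient_height.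
  assert (invE_max * lam * ln (w_init + lam) <= invE_max * lam * w_init)
    by (apply Rmult_le_compat_l; nra).
  lra.
Qed.

Lemma envelope_le_after t :
  relax_time * (ln (6 * invE_max / C_err) + ln (/ lam)) <= t - t_relax ->
  envelope t <= 2 * C_err * lam ^ 2.
Proof.
  intros Ht. pose proof invE_max_pos. pose proof C_err_ge_1.
  assert (Hth : 0 < relax_time) by (unfold relax_time; nra).
  assert (Hratio : 0 < 6 * invE_max / C_err) by (apply Rdiv_lt_0_compat; lra).
  assert (Hexp : exp (- (t - t_relax) / relax_time) <= C_err * lam / (6 * invE_max)).
  { replace (C_err * lam / (6 * invE_max)) with (exp (- (ln (6 * invE_max / C_err) + ln (/ lam)))).
    - apply exp_le_compat. apply Rle_div_l; [lra|]. nra.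
    - assert (Hinv : 0 < / lam) by (apply Rinv_0_lt_compat; lra).
      rewrite <- ln_mult, exp_Ropp, exp_ln
        by first [assumption| now apply Rmult_lt_0_compat].
      field. lra. }
  unfold envelope.
  assert (6 * invE_max * lam * exp (- (t - t_relax) / relax_time) <= C_err * lam ^ 2).
  { apply Rle_trans with (6 * invE_max * lam * (C_err * lam / (6 * invE_max))).
    - apply Rmult_le_compat_l; [nra| exact Hexp].
    - right. field. lra. }
  lra.
Qed.

Lemma quasi_eq_near_target t : t_relax <= T -> t_relax <= t <= T ->
  Rabs (quasi_eq t - lam * invE t) <= 4 * invE_max * invE_lip * lam ^ 2.
Proof.
  intros HtT Ht. destruct (relax_facts HtT t Ht) as [Ht' [Hw1 _]].
  pose proof invE_lip_pos. pose proof w_init_pos. pose proof lam_le_transient_height.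
  unfold quasi_eq. rewrite <- Rmult_minus_distr_l, Rabs_mult, Rabs_right by lra.
  apply Rle_trans with (lam * (invE_lip * Rabs (shifted t - t))).
  - apply Rmult_le_compat_l; [lra|]. apply invE_lipschitz_on.
    + split; [apply shifted_pos| apply shifted_le_max]; auto.
    + unfold t_relax, shift_max in *. pose proof w_max_pos. lra.
  - unfold shifted. replace (t + w t - t) with (w t) by ring.
    rewrite Rabs_right by lra.
    apply Rle_trans with (lam * (invE_lip * (4 * invE_max * lam))); [| right; ring].
    apply Rmult_le_compat_l; [| apply Rmult_le_compat_l]; lra.
Qed.

Definition delay_const :=
  3 + 3 * invE_max * w_init + 8 * invE_max * Rabs (ln (6 * invE_max / C_err)) + 11 * invE_max.

Definition error_const := 9 * (w_max + invE_max) + 2 * C_err + 4 * invE_max * invE_lip.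

Lemma delay_const_nonneg : 0 <= delay_const.
Proof.
  pose proof invE_max_pos. pose proof w_init_pos. pose proof (Rabs_pos (ln (6 * invE_max / C_err))).
  unfold delay_const. nra.
Qed.

Lemma lam_invE_le t : w_init <= t <= T -> 0 < lam * invE t <= invE_max.
Proof.
  intros Ht. pose proof w_init_pos. pose proof w_max_pos.
  assert (0 < invE t <= invE_max).
  { split; [apply invE_pos; lra| apply invE_le_max; unfold shift_max; lra]. }
  split; nra.
Qed.

(* For lam > 1/3 the crude bounds 0 < w <= w_max and lam invE <= invE_max suffice. *)
Lemma w_error_large_lam : / 3 < lam -> forall t, w_init <= t <= T ->
  Rabs (w t - lam / E t) <= error_const * lam ^ 2.
Proof.
  intros Hlarge t Ht. pose proof w_init_pos. pose proof w_max_pos. pose proof invE_max_pos.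
  pose proof C_err_ge_1. pose proof invE_lip_pos.
  assert (Hw1 : 0 < w t <= w_max) by (split; [apply w_pos| apply w_le_max]; lra).
  pose proof (lam_invE_le t Ht). change (lam / E t) with (lam * invE t).
  apply Rle_trans with (w_max + invE_max); [apply Rabs_le; lra|].
  assert (1 < 9 * lam ^ 2) by nra.
  unfold error_const. assert (0 <= (2 * C_err + 4 * invE_max * invE_lip) * lam ^ 2) by
    (apply Rmult_le_pos; [nra| apply pow2_ge_0]).
  nra.
Qed.

Lemma relaxation_fits : lam <= / 3 ->
  t_relax + relax_time * (Rabs (ln (6 * invE_max / C_err)) + ln (/ lam))
  <= w_init + delay_const * lam * ln (/ lam).
Proof.
  intros Hsmall. pose proof invE_max_pos. pose proof w_init_pos.
  pose proof (one_le_ln_inv lam ltac:(lra)) as HL.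
  pose proof t_relax_delay as Hd. pose proof (Rabs_pos (ln (6 * invE_max / C_err))).
  set (L := ln (/ lam)) in *. set (A := Rabs (ln (6 * invE_max / C_err))) in *.
  assert (HxL : forall x, 0 <= x -> x <= x * L) by (intros; nra).
  assert (0 < invE_max * lam) by nra.
  pose proof (HxL lam ltac:(lra)).
  pose proof (HxL (invE_max * lam * w_init) ltac:(nra)).
  pose proof (HxL (invE_max * lam * A) ltac:(nra)).
  unfold delay_const, relax_time. fold A. lra.
Qed.

Lemma w_error_small_lam : lam <= / 3 ->
  forall t, w_init + delay_const * lam * ln (/ lam) <= t <= T ->
  Rabs (w t - lam / E t) <= error_const * lam ^ 2.
Proof.
  intros Hsmall t Ht. pose proof invE_max_pos. pose proof C_err_ge_1. pose proof w_max_pos.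
  pose proof (relaxation_fits Hsmall) as Hfit.
  pose proof (one_le_ln_inv lam ltac:(lra)).
  pose proof (Rle_abs (ln (6 * invE_max / C_err))).
  assert (Hth : 0 < relax_time) by (unfold relax_time; nra).
  assert (Hrt : t_relax <= t <= T).
  { split; [|lra]. pose proof (Rabs_pos (ln (6 * invE_max / C_err))). nra. }
  assert (HtT : t_relax <= T) by lra.
  assert (Henv : envelope t <= 2 * C_err * lam ^ 2) by (apply envelope_le_after; nra).
  pose proof (w_near_quasi_eq HtT t Hrt). pose proof (quasi_eq_near_target t HtT Hrt).
  change (lam / E t) with (lam * invE t).
  replace (w t - lam * invE t) with ((w t - quasi_eq t) + (quasi_eq t - lam * invE t)) by ring.
  eapply Rle_trans; [apply Rabs_triang|].
  unfold error_const.
  assert (0 <= 9 * (w_max + invE_max) * lam ^ 2) by (apply Rmult_le_pos; [lra| apply pow2_ge_0]).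
  nra.
Qed.

End Wstar.

Theorem lemma16 (v : List.list R) (T : R) (E : R -> R)
  (Hv : in_Nstar v) (Hv0 : Nstar_nonzero v) (HT : 0 < T)
  (HE : is_critical_core v E) :
  exists d1 d2 : R,
    forall lam : R, 0 < lam <= 1 ->
    forall w : R -> R, is_wstar_solution v E lam T w ->
    forall t : R, / m1 v + d1 * lam * ln (/ lam) <= t <= T ->
      Rabs (w t - lam / E t) <= d2 * lam ^ 2.
Proof.
  exists (delay_const v T), (error_const v T). intros lam Hlam w Hw t Ht.
  destruct (Rle_lt_dec lam (/ 3)) as [Hsmall|Hlarge].
  - now apply (w_error_small_lam v E T lam w).
  - apply (w_error_large_lam v E T lam w); auto. split; [|lra].
    assert (0 <= ln (/ lam)).
    { rewrite <- ln_1. apply ln_le; [lra|]. rewrite <- Rinv_1. apply Rinv_le_contravar; lra. }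
    pose proof (delay_const_nonneg v T Hv Hv0 HT).
    assert (0 <= delay_const v T * lam * ln (/ lam)) by (apply Rmult_le_pos; [nra| auto]).
    unfold w_init. lra.
Qed.
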